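(* Let $1\leq\alpha\leq\theta<\omega_1$ and let $X,Y$ be $\mathbf{\Sigma}^0_\alpha$-isomorphic topological spaces. If the difference hierarchy $\{D_\beta(\mathbf{\Sigma}^0_\theta(X))\}_{\beta<\omega_1}$ does not collapse, then the difference hierarchy $\{D_\beta(\mathbf{\Sigma}^0_\theta(Y))\}_{\beta<\omega_1}$ does not collapse.
   Context: For a space $X$: $\mathbf{\Sigma}^0_0(X)=\{\emptyset\}$; $\mathbf{\Sigma}^0_1(X)$ the open sets; $\mathbf{\Sigma}^0_2(X)$ the countable unions of sets $U\setminus V$ with $U,V$ open; for $2<\alpha<\omega_1$, $\mathbf{\Sigma}^0_\alpha(X)$ the countable unions of complements of sets in $\bigcup_{\beta<\alpha}\mathbf{\Sigma}^0_\beta(X)$. An ordinal $\alpha=\lambda+n$ ($\lambda$ zero or limit, $n<\omega$) is even if $n$ is even and odd otherwise; $r(\alpha)=0$ if $\alpha$ is even, $1$ otherwise. $D_\beta(\{A_\gamma\}_{\gamma<\beta})=\bigcup\{A_\gamma\setminus\bigcup_{\delta<\gamma}A_\delta\mid\gamma<\beta,\ r(\gamma)\neq r(\beta)\}$, and $D_\beta(\mathcal{L})$ is the set of all such sets with all $A_\gamma\in\mathcal{L}$. The difference hierarchy $\{D_\beta(\mathbf{\Sigma}^0_\theta(X))\}_{\beta<\omega_1}$ collapses if for some $\beta<\omega_1$ the class $D_\beta(\mathbf{\Sigma}^0_\theta(X))$ coincides with the class of complements $\{X\setminus A\mid A\in D_\beta(\mathbf{\Sigma}^0_\theta(X))\}$.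 $X$ and $Y$ are $\mathbf{\Sigma}^0_\alpha$-isomorphic if there is a bijection $f:X\to Y$ such that $f^{-1}(A)\in\mathbf{\Sigma}^0_\alpha(X)$ for all $A\in\mathbf{\Sigma}^0_\alpha(Y)$ and $f(B)\in\mathbf{\Sigma}^0_\alpha(Y)$ for all $B\in\mathbf{\Sigma}^0_\alpha(X)$. *)

From mathcomp Require Import all_boot all_order.
From mathcomp Require Import boolp classical_sets functions cardinality topology.
Set Implicit Arguments. Unset Strict Implicit. Unset Printing Implicit Defensive.
Local Open Scope classical_set_scope.

(* ω1 as an abstract structure: an uncountable strict well-order in which
   every element has only countably many predecessors.  Any two such
   structures are order-isomorphic, so these are exactly (copies of) the
   countable ordinals α < ω1. *)
Record Omega1 := {
  ord :> Type;
  olt : ord -> ord -> Prop;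
  olt_wf : well_founded olt;
  olt_trans : forall a b c, olt a b -> olt b c -> olt a c;
  olt_total : forall a b, olt a b \/ a = b \/ olt b a;
  olt_pred_countable : forall a, countable [set b | olt b a];
  ord_uncountable : ~ countable [set: ord]
}.

Section Ordinals.
Variable W : Omega1.
Local Notation lt := (olt (o:=W)).

Definition ord_zero (a : W) := forall b, ~ lt b a.
Definition succ_of (b a : W) := lt b a /\ forall c, lt c a -> c = b \/ lt c b.
Definition ord_limit (a : W) := ~ ord_zero a /\ ~ exists b, succ_of b a.
Definition ord_one (a : W) := exists z, ord_zero z /\ succ_of z a.
Definition ord_two (a : W) := exists o, ord_one o /\ succ_of o a.
Definition ord_le (a b : W) := a = b \/ lt a b.

(* a = λ + n (λ zero or limit) is even iff n is even *)
Inductive ord_even : W -> Prop :=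
| even_base a : ord_zero a \/ ord_limit a -> ord_even a
| even_succ a b : succ_of b a -> ord_odd b -> ord_even a
with ord_odd : W -> Prop :=
| odd_succ a b : succ_of b a -> ord_even b -> ord_odd a.

Definition r_ord (a : W) : nat := if `[< ord_even a >] then 0 else 1.

Definition Sigma_step (X : topologicalType) (a : W)
  (rec : forall b, lt b a -> set (set X)) : set (set X) :=
  if `[< ord_zero a >] then [set set0]
  else if `[< ord_one a >] then [set A | open A]
  else if `[< ord_two a >] then
    [set A | exists U V : nat -> set X,
        (forall n, open (U n) /\ open (V n)) /\ A = \bigcup_n (U n `\` V n)]
  else
    [set A | exists B : nat -> set X,
        (forall n, exists b (h : lt b a), rec b h (~` B n)) /\ A = \bigcup_n B n].

Definition Sigma0 (X : topologicalType) : W -> set (set X) :=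
  Fix (@olt_wf W) (fun _ => set (set X)) (@Sigma_step X).

Definition Diff (X : Type) (beta : W) (L : set (set X)) : set (set X) :=
  [set S | exists A : W -> set X,
     (forall g, lt g beta -> L (A g)) /\
     S = \bigcup_(g in [set g | lt g beta /\ r_ord g <> r_ord beta])
           (A g `\` \bigcup_(d in [set d | lt d g]) A d)].

Definition diff_collapses (X : topologicalType) (theta : W) :=
  exists beta : W, Diff beta (@Sigma0 X theta) = setC @` Diff beta (@Sigma0 X theta).

Definition Sigma_isomorphic (alpha : W) (X Y : topologicalType) :=
  exists f : X -> Y, bijective f /\
    (forall A, @Sigma0 Y alpha A -> @Sigma0 X alpha (f @^-1` A)) /\
    (forall B, @Sigma0 X alpha B -> @Sigma0 Y alpha (f @` B)).

End Ordinals.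

From mathcomp Require Import all_boot all_order.
From mathcomp Require Import boolp classical_sets functions cardinality topology.
Set Implicit Arguments. Unset Strict Implicit. Unset Printing Implicit Defensive.
Local Open Scope classical_set_scope.

(* A Σ^0_α-isomorphism f and its inverse pull Σ^0_α sets back to Σ^0_α sets.
   By induction on the Borel rank, pulling back Σ^0_α sets implies pulling
   back Σ^0_θ sets for every θ ≥ α (a Σ^0_β set with β < α is also Σ^0_α), and
   a map pulling back the sets A_γ of a difference D_β(A) pulls back the
   difference itself.  Hence f and f^-1 transport D_β(Σ^0_θ) and complements
   between X and Y, so a collapse on one side is a collapse on the other. *)

Section Ordinals.
Variable W : Omega1.
Local Notation lt := (olt (o:=W)).

Lemma olt_min (P : W -> Prop) a : P a -> exists m, P m /\ forall c, P c -> ~ lt c m.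
Proof.
elim: (olt_wf a) => x _ IH Px.
case: (pselect (exists c, P c /\ lt c x)) => [[c [Pc cx]]|N]; first exact: IH cx Pc.
by exists x; split => // c Pc cx; apply: N; exists c.
Qed.

Lemma exists_succ (x a : W) : lt x a -> exists s, succ_of x s /\ ord_le s a.
Proof.
move=> xa; have [m [xm mmin]] := olt_min (P := lt x) xa.
exists m; split; first split => //.
  move=> c cm; case: (olt_total c x) => [|[|]]; [by right|by left|].
  by move=> xc; exfalso; apply: (mmin c).
case: (olt_total m a) => [|[|]]; [by right|by left|].
by move=> am; exfalso; apply: (mmin a).
Qed.

Lemma ord_one_neq0 (a : W) : ord_one a -> ~ ord_zero a.
Proof. by move=> [z [_ [za _]]] /(_ z). Qed.

Lemma ord_two_neq0 (a : W) : ord_two a -> ~ ord_zero a.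
Proof. by move=> [o [_ [oa _]]] /(_ o). Qed.

Lemma ord_two_neq1 (a : W) : ord_two a -> ~ ord_one a.
Proof.
move=> [o [/ord_one_neq0 o0 [oa _]]] [z [z0 [_ Hz]]].
by case: (Hz o oa) => [oz|/z0//]; apply: o0; rewrite oz.
Qed.

Lemma lt_ord_one (b a : W) : ord_one a -> lt b a -> ord_zero b.
Proof. by move=> [z [z0 [_ Hz]]] /Hz [->//|/z0]. Qed.

Lemma lt_ord_two (b a : W) : ord_two a -> lt b a -> ~ ord_zero b -> ord_one b.
Proof.
move=> [o [o1 [_ Ho]]] /Ho [->//|bo] b0.
by exfalso; apply/b0/(lt_ord_one o1 bo).
Qed.

End Ordinals.

Section Borel.
Variable W : Omega1.
Local Notation lt := (olt (o:=W)).
Variable X : topologicalType.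
Local Notation Sigma := (@Sigma0 W X).

Lemma Sigma0E (a : W) : Sigma a = @Sigma_step W X a (fun b _ => Sigma b).
Proof.
rewrite /Sigma0 Fix_eq // => x f g Hfg.
suff -> : f = g by [].
by apply: functional_extensionality_dep => y; apply: functional_extensionality_dep.
Qed.

Lemma Sigma0_zero (a : W) : ord_zero a -> Sigma a = [set set0].
Proof. by move=> a0; rewrite Sigma0E /Sigma_step asboolT. Qed.

Lemma Sigma0_one (a : W) : ord_one a -> Sigma a = [set A | open A].
Proof.
by move=> a1; rewrite Sigma0E /Sigma_step asboolF ?asboolT //; apply: ord_one_neq0.
Qed.

Lemma Sigma0_two (a : W) : ord_two a -> Sigma a =
    [set A | exists U V : nat -> set X,
        (forall n, open (U n) /\ open (V n)) /\ A = \bigcup_n (U n `\` V n)].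
Proof.
move=> a2; have a1 := ord_two_neq1 a2; have a0 := ord_two_neq0 a2.
by rewrite Sigma0E /Sigma_step asboolF // asboolF // asboolT.
Qed.

Lemma Sigma0_ge3 (a : W) : ~ ord_zero a -> ~ ord_one a -> ~ ord_two a ->
  Sigma a = [set A | exists B : nat -> set X,
        (forall n, exists b, lt b a /\ Sigma b (~` B n)) /\ A = \bigcup_n B n].
Proof.
move=> a0 a1 a2; rewrite Sigma0E /Sigma_step asboolF ?asboolF ?asboolF //.
apply/seteqP; split => A [B [HB ->]]; exists B; split => // n.
  by have [b [ba hb]] := HB n; exists b; split.
by have [b [ba hb]] := HB n; exists b, ba.
Qed.

Lemma Sigma0_two_setD (a : W) U V : ord_two a -> open U -> open V ->
  Sigma a (U `\` V).
Proof.
move=> a2 oU oV; rewrite Sigma0_two //; exists (fun=> U), (fun=> V); split => //.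
by rewrite bigcup_const.
Qed.

(* ~` (U `\` V) = (setT `\` U) `|` (V `\` set0) *)
Lemma Sigma0_two_setCD (a : W) U V : ord_two a -> open U -> open V ->
  Sigma a (~` (U `\` V)).
Proof.
move=> a2 oU oV; rewrite Sigma0_two //.
exists (fun k => if k is 0%N then setT else V),
       (fun k => if k is 0%N then U else set0); split.
  by case=> [|k]; split => //; (exact: openT || exact: open0).
apply/seteqP; split => x /=.
  move=> /not_andP[nU|/contrapT Vx]; first by exists 0%N.
  by exists 1%N => //=; split.
by move=> [[|k] _ /=] [? ?] [? ?].
Qed.

Lemma Sigma0_ge3_of_setC (a b : W) S : ~ ord_zero a -> ~ ord_one a -> ~ ord_two a ->
  lt b a -> Sigma b (~` S) -> Sigma a S.
Proof.
move=> a0 a1 a2 ba bS; rewrite Sigma0_ge3 //; exists (fun=> S).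
by split; [move=> _; exists b | rewrite bigcup_const].
Qed.

Lemma Sigma0_ge3_bigcup (a : W) (B : nat -> set X) :
  ~ ord_zero a -> ~ ord_one a -> ~ ord_two a ->
  (forall n, exists b, lt b a /\ Sigma b (~` B n)) -> Sigma a (\bigcup_n B n).
Proof. by move=> a0 a1 a2 HB; rewrite Sigma0_ge3 //; exists B. Qed.

Lemma Sigma0_mono (b a : W) S : lt b a -> ~ ord_zero b -> Sigma b S -> Sigma a S.
Proof.
move=> ba b0 bS.
case: (pselect (ord_zero a)) => [a0|a0]; first by case: (a0 b).
case: (pselect (ord_one a)) => [a1|a1]; first by case: b0; apply: lt_ord_one a1 ba.
case: (pselect (ord_two a)) => [a2|a2].
  rewrite (Sigma0_one (lt_ord_two a2 ba b0)) in bS.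
  by rewrite -(setD0 S); apply: Sigma0_two_setD => //; exact: open0.
case: (pselect (ord_one b)) => [b1|b1].
  (* S is open, so ~` S = setT `\` S is Σ^0_2, and the successor 2 of b is < a. *)
  have [s [bs sa]] := exists_succ ba.
  have s2 : ord_two s by exists b.
  have {}sa : lt s a by case: sa => // sa; exfalso; apply: a2; rewrite -sa.
  rewrite Sigma0_one // in bS.
  apply: (Sigma0_ge3_of_setC a0 a1 a2 sa).
  by rewrite -setTD; apply: Sigma0_two_setD => //; exact: openT.
case: (pselect (ord_two b)) => [b2|b2].
  rewrite Sigma0_two // in bS; case: bS => U [V [oUV ->]].
  apply: Sigma0_ge3_bigcup => // n; exists b; split => //.
  by case: (oUV n) => oU oV; apply: Sigma0_two_setCD.
rewrite Sigma0_ge3 // in bS; case: bS => B [HB ->].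
apply: Sigma0_ge3_bigcup => // n; have [c [cb cB]] := HB n.
by exists c; split => //; apply: olt_trans cb ba.
Qed.

End Borel.

Section Measurable.
Variable W : Omega1.

Definition Sigma_measurable (X Y : topologicalType) (a : W) (h : X -> Y) :=
  forall A, @Sigma0 W Y a A -> @Sigma0 W X a (h @^-1` A).

Lemma Sigma_measurable_le (X Y : topologicalType) (h : X -> Y) (alpha c : W) :
  ~ ord_zero alpha -> ord_le alpha c ->
  Sigma_measurable alpha h -> Sigma_measurable c h.
Proof.
move=> alpha0 + H; elim: (olt_wf c) => {}c _ IH [<-//|ac] A.
have c0 : ~ ord_zero c by move=> /(_ alpha).
case: (pselect (ord_one c)) => [c1|c1]; first by case: alpha0; apply: lt_ord_one c1 ac.
case: (pselect (ord_two c)) => [c2|c2].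
  have alpha1 := lt_ord_two c2 ac alpha0.
  have h_open B : open B -> open (h @^-1` B).
    by have := H B; rewrite !Sigma0_one //; apply.
  rewrite Sigma0_two // => -[U [V [oUV ->]]].
  rewrite preimage_bigcup Sigma0_two //.
  exists (fun n => h @^-1` U n), (fun n => h @^-1` V n); split => //.
  by move=> n; case: (oUV n) => oU oV; split; apply: h_open.
rewrite Sigma0_ge3 // => -[B [HB ->]].
rewrite preimage_bigcup; apply: Sigma0_ge3_bigcup => // n.
have [b [bc bB]] := HB n; rewrite preimage_setC.
case: (pselect (ord_zero b)) => [b0|b0].
  exists b; split => //; rewrite Sigma0_zero // in bB; rewrite Sigma0_zero //=.
  by rewrite bB preimage_set0.
case: (olt_total b alpha) => [balpha|alphab].
  by exists alpha; split => //; apply/H/(Sigma0_mono balpha).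
exists b; split => //; apply: IH => //.
by case: alphab => [->|]; [left|right].
Qed.

Lemma Diff_preimage (X Y : Type) (h : X -> Y) (beta : W) (LY : set (set Y))
    (LX : set (set X)) S :
  (forall A, LY A -> LX (h @^-1` A)) -> Diff beta LY S -> Diff beta LX (h @^-1` S).
Proof.
move=> H [A [HA ->]]; exists (fun g => h @^-1` A g); split.
  by move=> g gb; apply/H/HA.
by apply/seteqP; split => x /= [g gin [Ag nU]]; exists g.
Qed.

Lemma diff_collapses_transfer (X Y : topologicalType) (theta : W)
    (f : X -> Y) (g : Y -> X) :
  cancel f g -> cancel g f ->
  Sigma_measurable theta f -> Sigma_measurable theta g ->
  diff_collapses Y theta -> diff_collapses X theta.
Proof.
move=> fK gK mf mg [beta DY]; exists beta.
have preimage_gf S : f @^-1` (g @^-1` S) = S by apply/seteqP; split => x /=; rewrite fK.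
apply/seteqP; split => S.
  move=> /(Diff_preimage mg); rewrite DY => -[T DT TE].
  exists (f @^-1` T); first exact: Diff_preimage mf DT.
  by rewrite preimage_setC TE preimage_gf.
move=> [T DT <-].
have DgC : Diff beta (@Sigma0 W Y theta) (~` (g @^-1` T)).
  by rewrite DY; exists (g @^-1` T) => //; apply: Diff_preimage mg DT.
by have := Diff_preimage mf DgC; rewrite -preimage_setC preimage_gf.
Qed.

Lemma Sigma_isomorphic_measurable (alpha : W) (X Y : topologicalType) :
  Sigma_isomorphic alpha X Y ->
  exists (f : X -> Y) (g : Y -> X), [/\ cancel f g, cancel g f,
    Sigma_measurable alpha f & Sigma_measurable alpha g].
Proof.
move=> [f [[g fK gK] [mf img]]]; exists f, g; split => // B /img.
suff -> : g @^-1` B = f @` B by [].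
apply/seteqP; split => [y /= Bgy|_ [x Bx <-] /=]; last by rewrite fK.
by exists (g y); rewrite ?gK.
Qed.

End Measurable.

Theorem lemma4p4 (W : Omega1) (alpha theta : W) (X Y : topologicalType) :
  ~ ord_zero alpha -> ord_le alpha theta ->
  Sigma_isomorphic alpha X Y ->
  ~ diff_collapses X theta -> ~ diff_collapses Y theta.
Proof.
move=> alpha0 alpha_theta /Sigma_isomorphic_measurable [f [g [fK gK mf mg]]] nX.
apply: contra_not nX; apply: (diff_collapses_transfer fK gK).
  exact: Sigma_measurable_le alpha_theta mf.
exact: Sigma_measurable_le alpha_theta mg.
Qed.
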